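(* Let $\Pi_n$ be a standard PARITY$_n$ program such that no rule $y\leftarrow B$ of $\Pi_n$ has $y\in var(B)$ and every rule body of $\Pi_n$ is consistent. If $x\leftarrow B\in\Pi_n$ (with $x$ a variable) and $S(B\cup\{x\})=\{J\}$ for a single string $J$, then $J$ is an odd string.
   Context: A rule element is one of $\top$, $\bot$, $x$, $not\ x$, $not\ not\ x$, where $x$ is a variable. A (canonical) rule is $H\leftarrow B$ with $H$ a variable or $\bot$ and $B$ a finite set of rule elements; a canonical program is a finite set of rules. For a body $B$, $var(B)=\{e\in B: e\text{ is a variable}\}$. For a set of variables $I$: $I\models\top$; $I\not\models\bot$; $I\models x$ iff $I\models not\ not\ x$ iff $x\in I$; $I\models not\ x$ iff $x\notin I$; $I\models B$ iff $I$ satisfies every element of $B$; $I$ is closed under $H\leftarrow B$ if $I\models B$ implies $I\models H$. The reduct $\Pi^I$ replaces $not\ not\ x$ by $\top$ if $x\in I$ else $\bot$, and $not\ x$ by $\top$ if $x\notin I$ else $\bot$; $I$ is an answer set of $\Pi$ if $I$ is the least set closed under all rules of $\Pi^I$; $Ans(\Pi)$ is the set of answer sets; $var(\Pi)$ the set of variables occurring in $\Pi$. Strings $w\in\{0,1\}^n$ are identified with $\{x_i:w_i=1\}$; PARITY$_n$ is the set of strings in $\{0,1\}^n$ with an odd number of 1's (odd strings); a PARITY$_n$ program is a canonical program $\Pi$ with $var(\Pi)=\{x_1,\dots,x_n\}$ and $Ans(\Pi)=$ PARITY$_n$. For a set $B$ of rule elements, $S(B)=\{I\subseteq\{x_1,\dots,x_n\}: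 I\models B\}$; $B$ is consistent if $S(B)\neq\emptyset$. A PARITY$_n$ program $\Pi$ is standard if for every rule $x\leftarrow B\in\Pi$ with head a variable $x$: whenever $S(B\cup\{x\})$ has exactly one element, $not\ not\ x\notin B$. *)

From Stdlib Require List.
From mathcomp Require Import all_boot.
Set Implicit Arguments. Unset Strict Implicit. Unset Printing Implicit Defensive.

(* Variables are natural numbers; x_i is the number i (i = 1..n).
   A set of variables I is represented by its characteristic function. *)
Definition var := nat.
Definition interp := var -> bool.

Inductive elem := ETop | EBot | EVar of var | ENot of var | ENotNot of var.

(* head: Some x (variable) or None (bottom) ; body: finite list of elements *)
Record rule := Rule { head : option var; body : seq elem }.
Definition program := seq rule.

Definition sat_elem (I : interp) (e : elem) : bool :=
  match e with
  | ETop => true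
  | EBot => false
  | EVar x => I x
  | ENot x => ~~ I x
  | ENotNot x => I x
  end.

Definition sat_body (I : interp) (B : seq elem) : bool := all (sat_elem I) B.

Definition sat_head (I : interp) (h : option var) : bool :=
  match h with Some x => I x | None => false end.

Definition closed_rule (I : interp) (r : rule) : bool :=
  sat_body I (body r) ==> sat_head I (head r).

Definition closed_prog (I : interp) (P : program) : Prop :=
  forall r, List.In r P -> closed_rule I r.

Definition reduct_elem (I : interp) (e : elem) : elem :=
  match e with
  | ENotNot x => if I x then ETop else EBot
  | ENot x => if I x then EBot else ETop
  | e => e
  end.

Definition reduct_rule (I : interp) (r : rule) : rule :=
  Rule (head r) (map (reduct_elem I) (body r)).

Definition reduct (I : interp) (P : program) : program := map (reduct_rule I) P.

Definition least_closed (I : interp) (P : program) : Prop :=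
  closed_prog I P /\ (forall J : interp, closed_prog J P -> forall v, I v -> J v).

Definition answer_set (P : program) (I : interp) : Prop :=
  least_closed I (reduct I P).

Definition elem_vars (e : elem) : seq var :=
  match e with
  | ETop | EBot => [::]
  | EVar x | ENot x | ENotNot x => [:: x]
  end.

Definition rule_vars (r : rule) : seq var :=
  (if head r is Some x then [:: x] else [::]) ++ flatten (map elem_vars (body r)).

Definition prog_vars (P : program) : seq var := flatten (map rule_vars P).

(* strings of length n: sets I included in {x_1,...,x_n} *)
Definition is_string (n : nat) (I : interp) : Prop := forall v, I v -> 0 < v <= n.

Definition odd_string (n : nat) (I : interp) : Prop :=
  is_string n I /\ odd (count I (iota 1 n)).

Definition parity_program (n : nat) (P : program) : Prop :=
  (forall v, v \in prog_vars P <-> 0 < v <= n) /\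
  (forall I : interp, answer_set P I <-> odd_string n I).

Definition S (n : nat) (B : seq elem) (I : interp) : Prop :=
  is_string n I /\ sat_body I B.

Definition consistent (n : nat) (B : seq elem) : Prop := exists I, S n B I.

Definition S_singleton (n : nat) (B : seq elem) (J : interp) : Prop :=
  S n B J /\ (forall J', S n B J' -> forall v, J' v = J v).

Definition S_has_one (n : nat) (B : seq elem) : Prop := exists J, S_singleton n B J.

Definition standard (n : nat) (P : program) : Prop :=
  parity_program n P /\
  (forall x B, List.In (Rule (Some x) B) P ->
     S_has_one n (EVar x :: B) -> ~ List.In (ENotNot x) B).

(* If J were even, removing x from it would give an odd string J', hence an
   answer set.  The body B mentions x neither positively nor doubly negated
   (by the two side conditions), so J' still satisfies B and thus the reduct
   of B with respect to J'.  Closure of J' under that reduct rule forces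
   x into J', a contradiction. *)
From Pilot Require Import Defs.
From Stdlib Require List.
From mathcomp Require Import all_boot.
Set Implicit Arguments. Unset Strict Implicit. Unset Printing Implicit Defensive.

Definition remove_var (I : interp) (x : var) : interp := fun v => I v && (v != x).

Lemma sat_body_reduct (I : interp) (B : seq elem) :
  sat_body I (map (reduct_elem I) B) = sat_body I B.
Proof.
rewrite /sat_body all_map; apply: eq_all => e.
by case: e => //= v; case: (I v).
Qed.

Lemma answer_set_sat_rule (P : program) (I : interp) (r : rule) :
  answer_set P I -> List.In r P -> sat_body I (body r) -> sat_head I (Defs.head r).
Proof.
move=> [closedI _] rP satB.
have /implyP := closedI _ (List.in_map (reduct_rule I) _ _ rP).
by apply; rewrite sat_body_reduct.
Qed.

Lemma sat_body_remove_var (I : interp) (x : var) (B : seq elem) :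
  ~ List.In (EVar x) B -> ~ List.In (ENotNot x) B ->
  sat_body I B -> sat_body (remove_var I x) B.
Proof.
elim: B => //= e B IH noV noNN /andP [satE satB].
apply/andP; split; last by apply: IH => // H; [apply: noV | apply: noNN]; right.
case: e noV noNN satE => //= v noV noNN satE; rewrite /remove_var.
- by rewrite satE; case: eqP => // vx; case: noV; left; rewrite vx.
- by rewrite negb_and satE.
- by rewrite satE; case: eqP => // vx; case: noNN; left; rewrite vx.
Qed.

Lemma count_remove_var (I : interp) (x : var) (s : seq var) :
  uniq s -> x \in s -> I x -> count I s = (count (remove_var I x) s).+1.
Proof.
rewrite /remove_var.
elim: s => //= a s IH /andP [aNs us]; rewrite inE => /orP [/eqP xa | xs] Ix.
  subst a; rewrite Ix eqxx /= add1n; congr _.+1; apply: eq_in_count => v vs /=.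
  by case: eqP => [vx | _]; [rewrite -vx vs in aNs | rewrite andbT].
have ax : a != x by apply: contraNneq aNs => ->.
by rewrite IH // ax andbT addnS.
Qed.

Lemma odd_string_remove_var (n : nat) (I : interp) (x : var) :
  is_string n I -> I x -> ~~ odd (count I (iota 1 n)) ->
  odd_string n (remove_var I x).
Proof.
move=> strI Ix evenI; split; first by move=> v /andP [/strI].
have xn : x \in iota 1 n by rewrite mem_iota add1n ltnS; exact: strI.
by move: evenI; rewrite (count_remove_var (iota_uniq 1 n) xn Ix) /= negbK.
Qed.

Theorem mainTheorem14 (n : nat) (Pi : program)
  (Hstd : standard n Pi)
  (Hnoself : forall y B, List.In (Rule (Some y) B) Pi -> ~ List.In (EVar y) B)
  (Hcons : forall r, List.In r Pi -> consistent n (body r))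
  (x : var) (B : seq elem) (J : interp)
  (Hr : List.In (Rule (Some x) B) Pi)
  (HJ : S_singleton n (EVar x :: B) J) :
  odd_string n J.
Proof.
have [[[_ Hans] Hnotnot] [[strJ /andP [Jx satB]] _]] := (Hstd, HJ).
split=> //; apply/negPn/negP => evenJ.
have noNN : ~ List.In (ENotNot x) B by apply: (Hnotnot x B Hr); exists J.
have satB' := sat_body_remove_var (Hnoself x B Hr) noNN satB.
have ansJ' : answer_set Pi (remove_var J x).
  by apply/Hans/odd_string_remove_var.
have := answer_set_sat_rule ansJ' Hr satB'.
by rewrite /= /remove_var eqxx andbF.
Qed.
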